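(* Let $\mathbf{v}\in K(\mathbb{F}_e)$ be a Chern character of positive rank, and assume $\Delta(\mathbf{v})\geq 1/4$ if $e=0$, $\Delta(\mathbf{v})\geq 1/8$ if $e=1$, and $\Delta(\mathbf{v})\geq 0$ if $e\geq 2$. Then there exists a line bundle $L$ on $\mathbb{F}_e$ such that $\chi(\mathbf{v}(-L))\geq 0$, $\chi(\mathbf{v}(-L-E))\leq 0$, $\chi(\mathbf{v}(-L-F))\leq 0$, and $\chi(\mathbf{v}(-L-E-F))\leq 0$.
   Context: $\mathbb{F}_e=\mathbb{P}(\mathcal{O}_{\mathbb{P}^1}\oplus\mathcal{O}_{\mathbb{P}^1}(e))$, $e\ge 0$, with fiber class $F$ and section class $E$, $E^2=-e$, $F^2=0$, $E\cdot F=1$. For a character of positive rank $r$: $\nu=c_1/r$, $\Delta=\frac12\nu^2-\mathrm{ch}_2/r$; $\mathbf{v}(D)=\mathbf{v}\cdot\mathrm{ch}\,\mathcal{O}(D)$. *)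

From mathcomp Require Import all_boot all_order all_algebra.
Set Implicit Arguments. Unset Strict Implicit. Unset Printing Implicit Defensive.
Import Order.TTheory GRing.Theory Num.Theory.
Local Open Scope ring_scope.

(* Pic(F_e) = Z E + Z F; a divisor class a E + b F is the pair (a, b). *)
(* Intersection form: E^2 = -e, F^2 = 0, E.F = 1. *)
Definition idot (e : nat) (a b c d : rat) : rat :=
  - (e%:R) * a * c + a * d + b * c.

Record chern := Chern { ch_r : rat; ch_a : rat; ch_b : rat; ch_2 : rat }.

(* An element of K(F_e), given by its rank r, first Chern class c1 = aE+bF
   and second Chern class c2 (all integers); K(F_e) is free on these. *)
Record Kclass := Kcl { K_r : int; K_a : int; K_b : int; K_c2 : int }.

Definition ch (e : nat) (v : Kclass) : chern :=
  Chern (K_r v)%:~R (K_a v)%:~R (K_b v)%:~R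
    (idot e (K_a v)%:~R (K_b v)%:~R (K_a v)%:~R (K_b v)%:~R / 2 - (K_c2 v)%:~R).

(* v(D) = v . ch O(D), D = x E + y F. *)
Definition twist (e : nat) (v : chern) (x y : rat) : chern :=
  Chern (ch_r v) (ch_a v + ch_r v * x) (ch_b v + ch_r v * y)
    (ch_2 v + idot e (ch_a v) (ch_b v) x y + ch_r v * idot e x y x y / 2).

(* Riemann-Roch: chi(v) = r chi(O) + c1.(-K)/2 + ch2, with chi(O) = 1 and
   -K = 2E + (e+2)F. *)
Definition chi (e : nat) (v : chern) : rat :=
  ch_r v + idot e (ch_a v) (ch_b v) 2 (e%:R + 2) / 2 + ch_2 v.

Definition disc (e : nat) (v : chern) : rat :=
  idot e (ch_a v / ch_r v) (ch_b v / ch_r v) (ch_a v / ch_r v) (ch_b v / ch_r v) / 2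
  - ch_2 v / ch_r v.

(** By Riemann-Roch, [chi(v(D)) = r (chiO(nu + D) - Delta)], where
    [chiO(a, b) = chi(O(aE + bF)) = (a + 1)(b + 1) - e a(a + 1)/2].  So it is
    enough to find a lattice translate [(a, b)] of [nu] with [chiO >= Delta] at
    [(a, b)] and [chiO <= Delta] at [(a - 1, b)], [(a, b - 1)], [(a - 1, b - 1)].
    Translate first so that [u := a + 1] lies in [(0, 1]]; on that vertical
    line [chiO] is affine in [b] with slope [u > 0], so [b] can be taken in the
    unit window just above the root of [chiO = Delta].  Three corners are then
    automatic, and the last one, [(a - 1, b - 1)], needs exactly
    [u (1 - u) (1 - e/2) <= Delta]; as [u (1 - u) <= 1/4] this is the
    hypothesis on [Delta]. *)

From mathcomp Require Import all_boot all_order all_algebra.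
From mathcomp Require Import ring lra.
Import Order.TTheory GRing.Theory Num.Theory.
Local Open Scope ring_scope.

Definition chiO {R : fieldType} (e : nat) (a b : R) : R :=
  (a + 1) * (b + 1) - e%:R * a * (a + 1) / 2.

Lemma chi_twist (e : nat) (v : chern) (x y : rat) : ch_r v != 0 ->
  chi e (twist e v x y) =
  ch_r v * (chiO e (ch_a v / ch_r v + x) (ch_b v / ch_r v + y) - disc e v).
Proof.
case: v => r a b c /= r_neq0.
by rewrite /chi /twist /disc /idot /chiO /=; field.
Qed.

Section ChiOCorners.

Context {R : realFieldType}.
Variable e : nat.

Lemma mul_subr_le_quarter (u : R) : u * (1 - u) <= 1 / 4.
Proof. by have := sqr_ge0 (u - 1 / 2); rewrite expr2; nra. Qed.

Lemma disc_corner_bound (u D : R) : 0 < u -> u <= 1 ->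
  (e = 0%N -> 1 / 4 <= D) -> (e = 1%N -> 1 / 8 <= D) ->
  ((2 <= e)%N -> 0 <= D) ->
  0 <= D /\ u * (1 - u) * (1 - e%:R / 2) <= D.
Proof.
move=> u_gt0 u_le1; have := mul_subr_le_quarter u.
case: e => [|[|n]] quarter D0 D1 D2.
- by have := D0 erefl; rewrite mul0r subr0 mulr1; lra.
- have -> : 1 - 1%:R / 2 = 1 / 2 :> R by field.
  by have := D1 erefl; lra.
- have D_ge0 := D2 erefl; split => //.
  have : 1 - n.+2%:R / 2 <= 0 :> R.
    by rewrite -addn2 natrD; have : 0 <= n%:R :> R := ler0n _ n; lra.
  have : 0 <= u * (1 - u) by rewrite mulr_ge0 ?subr_ge0 // ltW.
  nra.
Qed.

(* [chiO_root u D] is the root [b] of [chiO e (u - 1) b = D]. *)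
Definition chiO_root (u D : R) : R := D / u - e%:R * (1 - u) / 2 - 1.

Lemma chiO_corners (u D b : R) : 0 < u -> u <= 1 -> 0 <= D ->
  u * (1 - u) * (1 - e%:R / 2) <= D ->
  chiO_root u D <= b < chiO_root u D + 1 ->
  [/\ 0 <= chiO e (u - 1) b - D, chiO e (u - 2) b - D <= 0,
      chiO e (u - 1) (b - 1) - D <= 0 & chiO e (u - 2) (b - 1) - D <= 0].
Proof.
move=> u_gt0 u_le1 D_ge0 D_big /andP[b_ge b_lt].
have u_neq0 : u != 0 by rewrite gt_eqF.
set th := b - chiO_root u D.
have th_ge0 : 0 <= th by rewrite subr_ge0.
have th_lt1 : th < 1 by rewrite /th; lra.
have -> : b = chiO_root u D + th by rewrite /th; ring.
have e_ge0 : 0 <= e%:R :> R := ler0n _ e.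
have Du_ge0 : 0 <= D / u by rewrite divr_ge0 // ltW.
have -> : chiO e (u - 1) (chiO_root u D + th) - D = u * th.
  by rewrite /chiO /chiO_root; field.
have -> : chiO e (u - 2) (chiO_root u D + th) - D =
          - ((1 - u) * (D / u + e%:R / 2 + th)) - D.
  by rewrite /chiO /chiO_root; field.
have -> : chiO e (u - 1) (chiO_root u D + th - 1) - D = u * (th - 1).
  by rewrite /chiO /chiO_root; field.
have -> : chiO e (u - 2) (chiO_root u D + th - 1) - D =
          (u * (1 - u) * (1 - e%:R / 2) - u * (1 - u) * th - D) / u.
  by rewrite /chiO /chiO_root; field.
split; try nra.
rewrite pmulr_lle0 ?invr_gt0 //.
have : 0 <= u * (1 - u) * th by rewrite !mulr_ge0 // ?subr_ge0 // ltW.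
lra.
Qed.

End ChiOCorners.

Theorem lemma4p5 (e : nat) (w : Kclass) :
  let v := ch e w in
  0 < ch_r v ->
  (e = 0%N -> 1 / 4 <= disc e v) ->
  (e = 1%N -> 1 / 8 <= disc e v) ->
  ((2 <= e)%N -> 0 <= disc e v) ->
  exists x y : int,
    0 <= chi e (twist e v (- x%:~R) (- y%:~R)) /\
    chi e (twist e v (- x%:~R - 1) (- y%:~R)) <= 0 /\
    chi e (twist e v (- x%:~R) (- y%:~R - 1)) <= 0 /\
    chi e (twist e v (- x%:~R - 1) (- y%:~R - 1)) <= 0.
Proof.
move=> v r_gt0 D0 D1 D2.
set r := ch_r v in r_gt0 *; set D := disc e v in D0 D1 D2 *.
set nu_a := ch_a v / r; set nu_b := ch_b v / r.
set x := Num.ceil nu_a; set u := 1 + nu_a - x%:~R.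
have /andP[x_lt x_ge] := ceil_itv nu_a; rewrite -/x intrD in x_lt.
have u_gt0 : 0 < u by rewrite /u; lra.
have u_le1 : u <= 1 by rewrite /u; lra.
have [D_ge0 D_big] := disc_corner_bound e u D u_gt0 u_le1 D0 D1 D2.
set t := nu_b - chiO_root e u D; set y := Num.floor t.
have /andP[y_le y_gt] := floor_itv t; rewrite -/y intrD in y_gt.
have b_win : chiO_root e u D <= nu_b - y%:~R < chiO_root e u D + 1.
  by apply/andP; split; rewrite /t in y_le y_gt; lra.
have [P00 P10 P01 P11] := chiO_corners e u D (nu_b - y%:~R) u_gt0 u_le1 D_ge0 D_big b_win.
exists x, y; rewrite !chi_twist ?gt_eqF // -/r -/nu_a -/nu_b -/D.
have -> : nu_a - x%:~R = u - 1 by rewrite /u; ring.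
have -> : nu_a + (- x%:~R - 1) = u - 2 by rewrite /u; ring.
have -> : nu_b + (- y%:~R - 1) = nu_b - y%:~R - 1 by ring.
by rewrite pmulr_rge0 // !pmulr_rle0.
Qed.
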